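(* Let $(\mathcal{P},d)$ be a 1-2-metric and $\alpha>0$. In the greedy-routing network creation game on $(\mathcal{P},d)$ with edge price $\alpha$, every Nash equilibrium is a social optimum, and every social optimum is a Nash equilibrium.
   Context: A 1-2-metric is a finite metric space $(\mathcal{P},d)$ with $d(u,v)\in\{1,2\}$ for all distinct $u,v$. Game: the agents are the points of $\mathcal{P}$ ($n=|\mathcal{P}|\ge2$). A strategy of agent $u$ is a set $S_u\subseteq\mathcal{P}\setminus\{u\}$; a strategy profile is $\mathbf{s}=(S_u)_{u\in\mathcal{P}}$, and $(S'_u,\mathbf{s}_{-u})$ denotes $\mathbf{s}$ with $S_u$ replaced by $S'_u$. The profile defines the directed network $G(\mathbf{s})$ on $\mathcal{P}$ with arcs $(u,v)$ for $v\in S_u$, arc $(u,v)$ having length $d(u,v)$. A greedy path from $u$ to $v$ in $G$ is a directed path $u=x_1,\dots,x_j=v$ of arcs of $G$ with $d(x_i,v)>d(x_{i+1},v)$ for all $i$; its length is the sum of its arc lengths. $\mathrm{stretch}_{G}(u,v)$ equals the minimum length of a greedy path from $u$ to $v$ divided by $d(u,v)$ if such a path exists, and equals $Z$ otherwise, where $Z$ is a fixed, sufficiently large penalty constant. The cost of agent $u$ is $c_u(\mathbf{s})=\sum_{v\neq u}\mathrm{stretch}_{G(\mathbf{s})}(u,v)+\alpha|S_u|$, the social cost is $\sum_u c_u(\mathbf{s})$, and a social optimum is a profile of minimum social cost. A Nash equilibrium (NE) is a profile $\mathbf{s}$ such that $c_u(\mathbf{s})\le c_u(S'_u,\mathbf{s}_{-u})$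 for every agent $u$ and every $S'_u\subseteq\mathcal{P}\setminus\{u\}$. *)

From HB Require Import structures.
From mathcomp Require Import all_boot all_order all_algebra.
From mathcomp Require Import boolp.
Set Implicit Arguments. Unset Strict Implicit. Unset Printing Implicit Defensive.
Import Order.TTheory GRing.Theory Num.Theory.
Local Open Scope ring_scope.

Section GreedyGame.
Variable T : finType.
Variable d : T -> T -> nat.

Definition one_two_metric : Prop :=
  [/\ forall u, d u u = 0%N,
      forall u v, d u v = d v u,
      forall u v w, (d u w <= d u v + d v w)%N
    & forall u v, u != v -> (d u v == 1%N) || (d u v == 2%N)].

(* A strategy profile: s u is the set of points agent u buys arcs to. *)
Definition profile := {ffun T -> {set T}}.

Definition valid_strategy (u : T) (S : {set T}) : bool := u \notin S.
Definition valid_profile (s : profile) : Prop := forall u, valid_strategy u (s u).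

Definition update (s : profile) (u : T) (S : {set T}) : profile :=
  [ffun w => if w == u then S else s w].

(* A greedy path u = x_1, ..., x_j = v in G(s), represented by the list
   [x_2; ...; x_j] of the points after u. *)
Definition greedy_step (s : profile) (v : T) : rel T :=
  fun a b => (b \in s a) && (d b v < d a v)%N.

Definition is_greedy_path (s : profile) (u v : T) (p : seq T) : bool :=
  path (greedy_step s v) u p && (last u p == v).

Definition path_length (u : T) (p : seq T) : nat := sumn (pairmap d u p).

Definition greedy_lengths (s : profile) (u v : T) : pred nat :=
  fun n => `[< exists p, is_greedy_path s u v p /\ path_length u p = n >].

Definition has_greedy_path (s : profile) (u v : T) : Prop :=
  exists p, is_greedy_path s u v p.

(* minimum length of a greedy path from u to v (0 if there is none; unused then) *)
Definition min_greedy_length (s : profile) (u v : T) : nat :=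
  match pselect (exists n, greedy_lengths s u v n) with
  | left H => ex_minn H
  | right _ => 0%N
  end.

Variable R : realFieldType.

Definition stretch (Z : R) (s : profile) (u v : T) : R :=
  if `[< has_greedy_path s u v >]
  then (min_greedy_length s u v)%:R / (d u v)%:R
  else Z.

Definition cost (Z alpha : R) (s : profile) (u : T) : R :=
  \sum_(v | v != u) stretch Z s u v + alpha * #|s u|%:R.

Definition social_cost (Z alpha : R) (s : profile) : R :=
  \sum_u cost Z alpha s u.

Definition social_optimum (Z alpha : R) (s : profile) : Prop :=
  valid_profile s /\
  forall s' : profile, valid_profile s' -> social_cost Z alpha s <= social_cost Z alpha s'.

Definition nash_equilibrium (Z alpha : R) (s : profile) : Prop :=
  valid_profile s /\
  forall (u : T) (S : {set T}), valid_strategy u S ->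
    cost Z alpha s u <= cost Z alpha (update s u S) u.

End GreedyGame.

From HB Require Import structures.
From mathcomp Require Import all_boot all_order all_algebra.
From mathcomp Require Import boolp.
From mathcomp Require Import zify.
Import Order.TTheory GRing.Theory Num.Theory.
Local Open Scope ring_scope.
Set Implicit Arguments. Unset Strict Implicit.

(* In a 1-2-metric a greedy path to v can only use an arc of another agent
   on its last step, an arc of length 1 into v.  Hence once every pair at
   distance 1 is joined by an arc ("unit arcs"), the cost of agent u depends
   on its own strategy alone, and the social cost is a sum of independent
   terms: minimising it is the same as each agent minimising its own cost.
   With a large penalty Z, both equilibria and optima buy every unit arc,
   since a missing unit arc (a, b) costs agent a the penalty Z, more than
   the social cost of the complete network. *)

Lemma eq_path_closed (T : Type) (e e' : rel T) (P : pred T) :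
  (forall a b, P a -> e a b = e' a b) -> (forall a b, P a -> e a b -> P b) ->
  forall p x, P x -> path e x p = path e' x p.
Proof.
move=> eq_ee' closedP; elim=> [//|y p IHp] x Px /=.
rewrite -eq_ee' //; case exy: (e x y) => //=; apply: IHp; exact: closedP exy.
Qed.

Section OneTwoMetric.

Variables (T : finType) (d : T -> T -> nat).
Hypothesis d12 : one_two_metric d.

Lemma dist_eq0 a b : d a b = 0%N -> a = b.
Proof. by case: d12 => _ _ _ d12ab dab0; apply/eqP/negPn/negP => /d12ab; rewrite dab0. Qed.

Lemma dist_le2 a b : (d a b <= 2)%N.
Proof.
case: (eqVneq a b) => [->|neq_ab]; first by case: d12 => ->.
by case: d12 => _ _ _ /(_ _ _ neq_ab) /orP [] /eqP ->.
Qed.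

Lemma dist_gt0 a b : a != b -> (0 < d a b)%N.
Proof. by move=> neq_ab; case: d12 => _ _ _ /(_ _ _ neq_ab) /orP [] /eqP ->. Qed.

Definition buys_unit_arcs (s : profile T) : bool :=
  [forall a, forall b, (d a b == 1%N) ==> (b \in s a)].

Lemma buys_unit_arcsP (s : profile T) :
  reflect (forall a b, d a b = 1%N -> b \in s a) (buys_unit_arcs s).
Proof.
apply: (iffP forallP) => [H a b /eqP dab1 | H a].
  by move/forallP: (H a) => /(_ b); rewrite dab1.
by apply/forallP => b; apply/implyP => /eqP /H.
Qed.

Lemma buys_unit_arcsPn (s : profile T) :
  reflect (exists a b, d a b = 1%N /\ b \notin s a) (~~ buys_unit_arcs s).
Proof.
apply: (iffP negP) => [nbuys | [a [b [dab1 nsab]]] /buys_unit_arcsP /(_ a b dab1)].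
  apply: contra_notP nbuys => H; apply/buys_unit_arcsP => a b dab1.
  by apply/negPn/negP => nsab; apply: H; exists a, b.
by rewrite (negbTE nsab).
Qed.

Lemma buys_unit_arcs_update (s s' : profile T) u :
  buys_unit_arcs s -> buys_unit_arcs s' -> buys_unit_arcs (update s u (s' u)).
Proof.
move=> /buys_unit_arcsP buys_s /buys_unit_arcsP buys_s'.
apply/buys_unit_arcsP => a b dab1; rewrite ffunE.
by case: eqP => [eq_au|_]; [rewrite -eq_au; apply: buys_s' | apply: buys_s].
Qed.

(* An arc used after the first step leads from distance 1 to distance 0,
   i.e. it is a unit arc into v, which both profiles contain. *)
Lemma greedy_path_unit_arcs (s s' : profile T) u v p :
  buys_unit_arcs s -> buys_unit_arcs s' -> s u = s' u ->
  is_greedy_path d s u v p = is_greedy_path d s' u v p.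
Proof.
move=> /buys_unit_arcsP buys_s /buys_unit_arcsP buys_s' su_s'u.
rewrite /is_greedy_path; congr (_ && _).
apply: (eq_path_closed (P := fun a => (a == u) || (d a v < d u v)%N)); last first.
- by rewrite eqxx.
- move=> a b /orP [/eqP -> | lt_au] /andP [_ lt_ba]; apply/orP; right => //.
  exact: ltn_trans lt_ba lt_au.
move=> a b /orP [/eqP -> | lt_au]; first by rewrite /greedy_step su_s'u.
rewrite /greedy_step; case: (ltnP (d b v) (d a v)) => lt_ba; last by rewrite !andbF.
have duv_le2 := dist_le2 u v; have dbv0 : d b v = 0%N by lia.
have dav1 : d a v = 1%N by lia.
by rewrite (dist_eq0 dbv0) (buys_s _ _ dav1) (buys_s' _ _ dav1).
Qed.

Lemma no_greedy_path_unit_arc (s : profile T) u v :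
  d u v = 1%N -> v \notin s u -> ~ has_greedy_path d s u v.
Proof.
move=> duv1 nsuv [[|b p]]; rewrite /is_greedy_path /=.
  by move=> /eqP eq_uv; move: duv1; rewrite eq_uv; case: d12 => ->.
rewrite /greedy_step => /andP [/andP [/andP [sub lt_bu] _] _].
have /dist_eq0 eq_bv : d b v = 0%N by lia.
by move: sub nsuv; rewrite eq_bv => ->.
Qed.

Lemma greedy_path_arc (s : profile T) u v :
  u != v -> v \in s u -> is_greedy_path d s u v [:: v].
Proof.
move=> neq_uv suv; rewrite /is_greedy_path /= /greedy_step suv eqxx !andbT.
by case: d12 => -> _ _ _; apply: dist_gt0.
Qed.

Section Costs.

Variables (R : realFieldType) (Z alpha : R).
Hypotheses (Z_ge0 : 0 <= Z) (alpha_ge0 : 0 <= alpha).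

Lemma eq_stretch (s s' : profile T) u v :
  (forall p, is_greedy_path d s u v p = is_greedy_path d s' u v p) ->
  stretch d Z s u v = stretch d Z s' u v.
Proof.
move=> eq_paths.
have eq_lengths : greedy_lengths d s u v = greedy_lengths d s' u v.
  apply/funext => n; rewrite /greedy_lengths.
  by under eq_exists => p do rewrite eq_paths.
have eq_has : has_greedy_path d s u v = has_greedy_path d s' u v.
  by rewrite /has_greedy_path; under eq_exists => p do rewrite eq_paths.
by rewrite /stretch /min_greedy_length eq_lengths eq_has.
Qed.

Lemma cost_unit_arcs (s s' : profile T) u :
  buys_unit_arcs s -> buys_unit_arcs s' -> s u = s' u ->
  cost d Z alpha s u = cost d Z alpha s' u.
Proof.
move=> buys_s buys_s' su_s'u; rewrite /cost su_s'u; congr (_ + _).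
apply: eq_bigr => v _; apply: eq_stretch => p; exact: greedy_path_unit_arcs.
Qed.

Lemma stretch_ge0 (s : profile T) u v : 0 <= stretch d Z s u v.
Proof. by rewrite /stretch; case: ifP => // _; apply: divr_ge0. Qed.

Lemma cost_ge0 (s : profile T) u : 0 <= cost d Z alpha s u.
Proof.
rewrite /cost addr_ge0 ?mulr_ge0 //.
by apply: sumr_ge0 => v _; apply: stretch_ge0.
Qed.

Lemma cost_le_social_cost (s : profile T) u :
  cost d Z alpha s u <= social_cost d Z alpha s.
Proof.
rewrite /social_cost (bigD1 u) //= lerDl.
by apply: sumr_ge0 => w _; apply: cost_ge0.
Qed.

Lemma cost_missing_unit_arc (s : profile T) u v :
  d u v = 1%N -> v \notin s u -> Z <= cost d Z alpha s u.
Proof.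
move=> duv1 nsuv.
have neq_vu : v != u by apply/eqP => eq_vu; move: duv1; rewrite eq_vu; case: d12 => ->.
have stretch_uv : stretch d Z s u v = Z.
  by rewrite /stretch; case: asboolP => // /(no_greedy_path_unit_arc duv1 nsuv).
rewrite /cost (bigD1 v) //= stretch_uv -addrA lerDl addr_ge0 ?mulr_ge0 //.
by apply: sumr_ge0 => w _; apply: stretch_ge0.
Qed.

Lemma social_cost_missing_unit_arc (s : profile T) :
  ~~ buys_unit_arcs s -> Z <= social_cost d Z alpha s.
Proof.
move=> /buys_unit_arcsPn [a [b [dab1 nsab]]].
exact: le_trans (cost_missing_unit_arc dab1 nsab) (cost_le_social_cost s a).
Qed.

Lemma stretch_arc_le1 (s : profile T) u v :
  u != v -> v \in s u -> stretch d Z s u v <= 1.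
Proof.
move=> neq_uv suv; have path_uv := greedy_path_arc neq_uv suv.
rewrite /stretch; case: asboolP => [_|[]]; last by exists [:: v].
rewrite /min_greedy_length; case: pselect => [len_ex|[]]; last first.
  by exists (d u v); apply/asboolP; exists [:: v]; rewrite /path_length /= addn0.
case: ex_minnP => m _ min_m.
rewrite ler_pdivrMr ?ltr0n ?dist_gt0 // mul1r ler_nat; apply: min_m.
by apply/asboolP; exists [:: v]; rewrite /path_length /= addn0.
Qed.

Definition buy_all_bound : R := #|T|%:R + alpha * #|T|%:R.

Lemma cost_buy_all (s : profile T) u :
  s u = [set~ u] -> cost d Z alpha s u <= buy_all_bound.
Proof.
move=> su_all; rewrite /cost; apply: lerD; last first.
  by rewrite ler_wpM2l // ler_nat su_all max_card.
apply: (@le_trans _ _ (\sum_(v | v != u) (1 : R))).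
  apply: ler_sum => v neq_vu; apply: stretch_arc_le1; first by rewrite eq_sym.
  by rewrite su_all !inE.
by rewrite sumr_const ler_nat max_card.
Qed.

Definition complete_profile : profile T := [ffun u => [set~ u]].

Lemma valid_complete_profile : valid_profile complete_profile.
Proof. by move=> u; rewrite /valid_strategy ffunE !inE eqxx. Qed.

Lemma social_cost_le (s : profile T) :
  (forall u, cost d Z alpha s u <= buy_all_bound) ->
  social_cost d Z alpha s <= #|T|%:R * buy_all_bound.
Proof.
move=> cost_le; rewrite /social_cost mulr_natl -sumr_const.
by apply: ler_sum => u _.
Qed.

Lemma social_cost_complete_profile :
  social_cost d Z alpha complete_profile <= #|T|%:R * buy_all_bound.
Proof. by apply: social_cost_le => u; apply: cost_buy_all; rewrite ffunE. Qed.

Section LargePenalty.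

Hypothesis large_Z : #|T|%:R * buy_all_bound < Z.

Lemma buy_all_bound_lt_Z (u : T) : buy_all_bound < Z.
Proof.
apply: le_lt_trans large_Z; rewrite ler_peMl ?addr_ge0 ?mulr_ge0 //.
by rewrite (ler_nat _ 1); apply/card_gt0P; exists u.
Qed.

Lemma nash_cost_le (s : profile T) u :
  nash_equilibrium d Z alpha s -> cost d Z alpha s u <= buy_all_bound.
Proof.
case=> _ /(_ u [set~ u]) best_u.
apply: le_trans (best_u _) (cost_buy_all _); last by rewrite ffunE eqxx.
by rewrite /valid_strategy !inE eqxx.
Qed.

Lemma nash_buys_unit_arcs (s : profile T) :
  nash_equilibrium d Z alpha s -> buys_unit_arcs s.
Proof.
move=> nash_s; apply/negPn/negP => /buys_unit_arcsPn [a [b [dab1 nsab]]].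
have := lt_le_trans (buy_all_bound_lt_Z a) (cost_missing_unit_arc dab1 nsab).
by rewrite ltNge nash_cost_le.
Qed.

Lemma optimum_buys_unit_arcs (s : profile T) :
  social_optimum d Z alpha s -> buys_unit_arcs s.
Proof.
case=> _ /(_ _ valid_complete_profile) opt_s; apply/negPn/negP.
move=> /social_cost_missing_unit_arc Z_le.
have := le_lt_trans (le_trans opt_s social_cost_complete_profile) large_Z.
by rewrite ltNge (le_trans Z_le).
Qed.

Lemma nash_social_optimum (s : profile T) :
  nash_equilibrium d Z alpha s -> social_optimum d Z alpha s.
Proof.
move=> nash_s; have buys_s := nash_buys_unit_arcs nash_s.
have [valid_s best_s] := nash_s; split => // s' valid_s'.
have [buys_s'|/social_cost_missing_unit_arc Z_le] := boolP (buys_unit_arcs s').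
  apply: ler_sum => u _; apply: le_trans (best_s u (s' u) (valid_s' u)) _.
  rewrite (cost_unit_arcs (buys_unit_arcs_update u buys_s buys_s') buys_s') //.
  by rewrite ffunE eqxx.
apply/ltW/lt_le_trans/Z_le/le_lt_trans/large_Z/social_cost_le => u.
exact: nash_cost_le.
Qed.

(* For w <> u the deviation does not change w's cost, so the social cost
   changes exactly by the change of u's cost. *)
Lemma social_optimum_nash (s : profile T) :
  social_optimum d Z alpha s -> nash_equilibrium d Z alpha s.
Proof.
move=> opt_s; have buys_s := optimum_buys_unit_arcs opt_s.
have [valid_s min_s] := opt_s; split => // u S valid_S.
have valid_upd : valid_profile (update s u S).
  by move=> w; rewrite ffunE; case: eqP => [->|_].
have [buys_upd|nbuys_upd] := boolP (buys_unit_arcs (update s u S)).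
  have eq_others : \sum_(w | w != u) cost d Z alpha (update s u S) w =
                   \sum_(w | w != u) cost d Z alpha s w.
    apply: eq_bigr => w neq_wu; apply: cost_unit_arcs => //.
    by rewrite ffunE (negbTE neq_wu).
  move: (min_s _ valid_upd).
  by rewrite /social_cost (bigD1 u) //= [X in _ <= X](bigD1 u) //= eq_others lerD2r.
have [a [b [dab1 nsab]]] := elimT (buys_unit_arcsPn _) nbuys_upd.
have eq_au : a = u.
  apply/eqP; apply: contraNT nsab => neq_au; rewrite ffunE (negbTE neq_au).
  exact: (elimT (buys_unit_arcsP _) buys_s).
move: dab1 nsab; rewrite eq_au => dub1 nsub.
apply: le_trans (cost_missing_unit_arc dub1 nsub).
apply/ltW/le_lt_trans/large_Z/le_trans/social_cost_complete_profile.
exact: le_trans (cost_le_social_cost s u) (min_s _ valid_complete_profile).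
Qed.

End LargePenalty.
End Costs.
End OneTwoMetric.

Theorem theorem2p4 (T : finType) (d : T -> T -> nat) (R : realFieldType) (alpha : R) :
  (1 < #|T|)%N -> one_two_metric d -> 0 < alpha ->
  exists Z0 : R, forall Z : R, Z0 <= Z ->
    forall s : profile T,
      (nash_equilibrium d Z alpha s -> social_optimum d Z alpha s) /\
      (social_optimum d Z alpha s -> nash_equilibrium d Z alpha s).
Proof.
move=> _ d12 alpha_gt0.
have alpha_ge0 := ltW alpha_gt0.
pose Z0 : R := #|T|%:R * buy_all_bound T alpha + 1.
exists Z0 => Z Z0_le s.
have large_Z : #|T|%:R * buy_all_bound T alpha < Z.
  by apply: lt_le_trans Z0_le; rewrite ltrDl.
have Z_ge0 : 0 <= Z.
  by apply/ltW/le_lt_trans/large_Z; rewrite mulr_ge0 ?addr_ge0 ?mulr_ge0.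
split; [exact: nash_social_optimum | exact: social_optimum_nash].
Qed.
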